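(* Let $n\geq 7$ and $3\leq \Delta\leq n-2$ be integers, and let $T$ be a tree with $n$ vertices and maximum degree $\Delta$. (i) If $3\leq\Delta\leq\lfloor\frac{n-1}{2}\rfloor$, then $$SO(T)\geq \Delta\sqrt{\Delta^2+4}+\sqrt{8}\,(n-2\Delta-1)+\sqrt{5}\,\Delta,$$ with equality if and only if $T$ is isomorphic to a tree $T_\Delta$, i.e. a spider with exactly $\Delta$ legs, each leg of length at least $2$. (ii) If $\lfloor\frac{n-1}{2}\rfloor<\Delta\leq n-2$, then $$SO(T)\geq (n-\Delta-1)\sqrt{\Delta^2+4}+(2\Delta-n+1)\sqrt{\Delta^2+1}+\sqrt{5}\,(n-\Delta-1),$$ with equality if and only if $T\cong T_{n,\Delta}$, where $T_{n,\Delta}$ is the tree obtained from the star $K_{1,\Delta}$ (with $\Delta+1$ vertices) by attaching one pendant edge to each of $n-\Delta-1$ of its leaves.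
   Context: All graphs are finite, simple and undirected; $d_G(v)$ denotes the degree of a vertex $v$ in $G$. The Sombor index of a graph $G$ is $SO(G)=\sum_{uv\in E(G)}\sqrt{d_G(u)^2+d_G(v)^2}$. A spider is a tree with at most one vertex of degree greater than two; this vertex is the hub, and a leg is a path from the hub to a leaf; the length of a leg is its number of edges. *)

From HB Require Import structures.
From mathcomp Require Import all_boot all_order all_algebra.
From mathcomp Require Import reals.
Set Implicit Arguments. Unset Strict Implicit. Unset Printing Implicit Defensive.
Import Order.TTheory GRing.Theory Num.Theory.

Section Graphs.
Variables (T : finType) (e : rel T).

Definition simple_graph : Prop := symmetric e /\ irreflexive e.

Definition deg (x : T) : nat := #|[set y | e x y]|.

Definition maxdeg : nat := \max_(x : T) deg x.

Definition connected_graph : Prop := forall x y : T, connect e x y.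

Definition acyclic : Prop :=
  forall c : seq T, uniq c -> 3 <= size c -> ~~ cycle e c.

Definition is_tree : Prop := simple_graph /\ connected_graph /\ acyclic.

(* Sombor index: sum over edges {x,y} (each unordered edge counted once,
   via the ordering of T given by enum_rank) of sqrt(d(x)^2 + d(y)^2). *)
Definition sombor (R : realType) : R :=
  \sum_(x : T) \sum_(y : T | e x y && (enum_rank x < enum_rank y)%N)
     Num.sqrt (((deg x) ^ 2 + (deg y) ^ 2)%N%:R).

Definition is_spider : Prop := is_tree /\ (#|[set v | 2 < deg v]| <= 1)%N.

Definition leg (h : T) (p : seq T) : bool :=
  [&& path e h p, uniq (h :: p), p != [::] & deg (last h p) == 1%N].

(* T_Delta: a spider with exactly D legs (the hub h has degree D, each edge
   at the hub starting exactly one leg), each leg of length at least 2 *)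
Definition is_T_Delta (D : nat) : Prop :=
  is_spider /\ exists h : T, deg h = D /\ (forall p, leg h p -> (2 <= size p)%N).

End Graphs.

Definition isomorphic (T1 T2 : finType) (e1 : rel T1) (e2 : rel T2) : Prop :=
  exists f : T1 -> T2, bijective f /\ forall x y, e2 (f x) (f y) = e1 x y.

(* T_{n,D} on vertex set 'I_n: vertex 0 is the centre of the star K_{1,D}
   with leaves 1..D; for j = 1..n-D-1 the vertex D+j is a pendant vertex
   attached to the leaf j. *)
Definition TnD_rel (n D : nat) : rel 'I_n := fun i j =>
  [|| (i == 0 :> nat) && (1 <= j <= D)%N,
      (j == 0 :> nat) && (1 <= i <= D)%N,
      (D < j)%N && (i == j - D :> nat)
    | (D < i)%N && (j == i - D :> nat)].
Arguments TnD_rel n D : clear implicits.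

From HB Require Import structures.
From mathcomp Require Import all_boot all_order all_algebra.
From mathcomp Require Import reals.
From mathcomp Require Import zify ring lra.
Set Implicit Arguments. Unset Strict Implicit. Unset Printing Implicit Defensive.
Import Order.TTheory GRing.Theory Num.Theory.

(* Fix a vertex v of maximum degree D and discharge the Sombor index onto the
   vertices: an edge at v is charged to its other end, and any other edge pays
   [share d] to each of its ends of degree d.  These shares never exceed the
   weight sqrt (d1^2 + d2^2) of the edge, with equality when d1, d2 <= 2.
   Adding up what each vertex receives, and using that a tree has n - 1 edges,
     SO(T) = bound (i) + l * leaf_gain D + excess,
   where l is the number of leaves adjacent to v, leaf_gain D > 0 for D >= 3,
   and the excess is nonnegative and vanishes iff every vertex other than v has
   degree at most 2.  Counting degrees gives l >= 2D + 1 - n, with equality iff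
   all legs have length at most 2, whence bound (ii).  In the equality cases T
   is a spider centred at v, without legs of length 1 for (i) and with legs of
   length 1 or 2 for (ii); the latter are labelled explicitly to match T_{n,D}. *)

Section SomborWeights.
Variable R : rcfType.
Local Open Scope ring_scope.

Definition sombor_term (a b : nat) : R := Num.sqrt ((a ^ 2 + b ^ 2)%N%:R).

Lemma sombor_termC a b : sombor_term a b = sombor_term b a.
Proof. by rewrite /sombor_term addnC. Qed.

Lemma sombor_term_ge a b (r : R) :
  0 <= r -> r ^+ 2 <= (a ^ 2 + b ^ 2)%N%:R -> r <= sombor_term a b.
Proof. by move=> r0 le_r; rewrite -(ger0_norm r0) -sqrtr_sqr ler_sqrt. Qed.

Lemma sombor_term_ltr a b b' : (b < b')%N -> sombor_term a b < sombor_term a b'.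
Proof. by move=> lt_b; rewrite ltr_sqrt ?ltr0n ?ltr_nat ?ltn_add2l ?ltn_sqr //; lia. Qed.

Lemma sombor_term12 : sombor_term 1 2 = Num.sqrt 5. Proof. by []. Qed.

Lemma sombor_term22 : sombor_term 2 2 = 2 * Num.sqrt 2.
Proof.
rewrite /sombor_term (_ : (_ + _)%N%:R = 2 ^+ 2 * 2 :> R); last by rewrite -natrX -natrM.
by rewrite sqrtrM ?sqrtr_sqr ?ger0_norm // exprn_ge0.
Qed.

Lemma sqrt2_bounds : 141 <= 100 * (Num.sqrt 2 : R) <= 142.
Proof. have := sqrtr_ge0 (2 : R); have := @sqr_sqrtr R 2 (ler0n _ 2); nra. Qed.

Lemma sqrt5_bounds : 223 <= 100 * (Num.sqrt 5 : R) <= 224.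
Proof. have := sqrtr_ge0 (5 : R); have := @sqr_sqrtr R 5 (ler0n _ 5); nra. Qed.

Definition slope : R := 3 * Num.sqrt 2 - Num.sqrt 5.
Definition gap : R := 2 * Num.sqrt 2 - Num.sqrt 5.

(* For [d <= 2], a vertex of degree [d] away from the hub receives exactly
   [budget d] in shares; [budget] is affine in [d], so its sum over the
   vertices other than the hub depends only on [n] and the hub degree. *)
Definition share (d : nat) : R :=
  if d == 1%N then Num.sqrt 5 - Num.sqrt 2 else slope - gap / d.-1%:R.

Definition budget (d : nat) : R := 2 * Num.sqrt 2 + (d%:R - 2) * slope.

Lemma gap_gt0 : 0 < gap.
Proof. by have := sqrt2_bounds; have := sqrt5_bounds; rewrite /gap; lra. Qed.

Lemma share1 : share 1 = Num.sqrt 5 - Num.sqrt 2. Proof. by []. Qed.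

Lemma share2 : share 2 = Num.sqrt 2.
Proof. by rewrite /share /= divr1 /slope /gap; ring. Qed.

Lemma mul_share d : (1 < d)%N -> d.-1%:R * share d = d.-1%:R * slope - gap.
Proof.
move=> d_gt1; rewrite /share ifF; last by lia.
by rewrite mulrBr mulrCA divff ?mulr1 // pnatr_eq0; lia.
Qed.

Lemma share_le_slope d : share d <= slope.
Proof.
have := gap_gt0; rewrite /share; case: eqP => _ gap_gt0.
  by move: gap_gt0; rewrite /slope /gap; lra.
by rewrite lerBlDr lerDl divr_ge0 ?ler0n ?ltW.
Qed.

Lemma share_edge_eq a b : (1 <= a <= 2)%N -> (1 <= b <= 2)%N -> (3 <= a + b)%N ->
  share a + share b = sombor_term a b.
Proof.
move=> a12 b12 ab3.
have : [|| (a == 1) && (b == 2), (a == 2) && (b == 1) | (a == 2) && (b == 2)]%N by lia.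
case/or3P => /andP [/eqP -> /eqP ->].
- by rewrite share1 share2 sombor_term12; ring.
- by rewrite share1 share2 sombor_termC sombor_term12; ring.
- by rewrite share2 sombor_term22; ring.
Qed.

Lemma share_edge_le a b : (0 < a)%N -> (0 < b)%N -> (3 <= a + b)%N ->
  share a + share b <= sombor_term a b.
Proof.
wlog le_ab : a b / (a <= b)%N.
  move=> wlog_ab a0 b0 ab3; case: (leqP a b) => [le|/ltnW le]; first exact: wlog_ab.
  by rewrite addrC sombor_termC wlog_ab // addnC.
move=> a0 b0 ab3; case: (leqP b 2) => [b2|b3]; first by rewrite share_edge_eq //; lia.
have := share_le_slope a; have := share_le_slope b.
have := sqrt2_bounds; have := sqrt5_bounds; rewrite /slope => s5 s2 sb sa.
have sombor_ge (r : R) (m : nat) :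
    0 <= r -> r ^+ 2 <= m%:R -> (m <= a ^ 2 + b ^ 2)%N -> r <= sombor_term a b.
  move=> r0 le_r le_m; apply: sombor_term_ge => //.
  by rewrite (le_trans le_r) ?ler_nat.
case: (leqP 18 (a ^ 2 + b ^ 2)) => [big|small].
  by have := @sombor_ge (42 / 10) 18 (ltac:(lra)) (ltac:(rewrite expr2; lra)) big; lra.
have [a1|a2] : a = 1%N \/ a = 2%N by nia.
  have := @sombor_ge 3 9 (ltac:(lra)) (ltac:(rewrite expr2; lra)) (ltac:(nia)).
  by rewrite a1 share1 in sa *; lra.
have := @sombor_ge (36 / 10) 13 (ltac:(lra)) (ltac:(rewrite expr2; lra)) (ltac:(nia)).
by rewrite a2 share2 in sa *; lra.
Qed.

Definition hub_gain (D : nat) : R := sombor_term D 2 - Num.sqrt 2.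
Definition leaf_gain (D : nat) : R := sombor_term D 1 - sombor_term D 2 + gap.

Definition vertex_excess (near : bool) (D d : nat) : R :=
  (if near then sombor_term D d - hub_gain D + d.-1%:R * share d else d%:R * share d)
  - budget d - (if near && (d == 1%N) then leaf_gain D else 0).
Arguments vertex_excess : simpl never.

Lemma slope_sub_gap : slope - gap = Num.sqrt 2.
Proof. by rewrite /slope /gap; ring. Qed.

Lemma vertex_excess_small near D d : (0 < d <= 2)%N -> vertex_excess near D d = 0.
Proof.
move=> d12; have [->|->] : d = 1%N \/ d = 2%N by lia.
  by case: near; rewrite /vertex_excess /= ?share1 /budget /hub_gain /leaf_gain /slope /gap; ring.
by case: near; rewrite /vertex_excess /= share2 /budget /hub_gain /slope; ring.
Qed.

Lemma vertex_excess_big near D d : (2 < d)%N -> 0 < vertex_excess near D d.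
Proof.
move=> d3; have d1 : (1 < d)%N by lia.
rewrite /vertex_excess (_ : (d == 1%N) = false) ?andbF ?subr0 /budget; last by lia.
have -> : d%:R = d.-1%:R + 1 :> R by rewrite natr1 (ltn_predK d1).
have sg := slope_sub_gap; case: near.
  have := sombor_term_ltr D (isT : (2 < 3)%N); have := sombor_term_ltr D d3.
  by rewrite mul_share // /hub_gain; lra.
rewrite mulrDl mul1r mul_share // /share ifF; last by lia.
have gap_lt : gap / d.-1%:R < gap.
  by rewrite ltr_pdivrMr ?ltr0n ?ltr_pMr ?gap_gt0 ?ltr1n //; lia.
set m := d.-1%:R; rewrite -sg.
have -> : m * slope - gap + (slope - gap / m) - (2 * (slope - gap) + (m + 1 - 2) * slope)
          = gap - gap / m by ring.
by rewrite subr_gt0.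
Qed.

Lemma vertex_excess_ge0 near D d : (0 < d)%N -> 0 <= vertex_excess near D d.
Proof.
move=> d_gt0; case: (leqP d 2) => d2; first by rewrite vertex_excess_small ?d_gt0.
exact/ltW/vertex_excess_big.
Qed.

Lemma vertex_excess_eq0 near D d : (0 < d)%N -> (vertex_excess near D d == 0) = (d <= 2)%N.
Proof.
move=> d_gt0; case: (leqP d 2) => d2; first by rewrite vertex_excess_small ?d_gt0 ?eqxx.
by rewrite gt_eqF ?vertex_excess_big.
Qed.

Lemma leaf_gain_gt0 D : (3 <= D)%N -> 0 < leaf_gain D.
Proof.
move=> D3; set x := sombor_term D 1; set y := sombor_term D 2.
have ge3 b : 3 <= sombor_term D b.
  by apply: sombor_term_ge; rewrite ?ler0n // -natrX ler_nat; nia.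
have [gx gy] : 3 <= x /\ 3 <= y by split; apply: ge3.
have yx : x < y by apply: sombor_term_ltr.
have prod : (y - x) * (y + x) = 3 by rewrite -subr_sqr !sqr_sqrtr ?ler0n //; ring.
have : (y - x) * 6 <= 3.
  by rewrite -prod ler_wpM2l ?subr_ge0 ?ltW //; lra.
by have := sqrt2_bounds; have := sqrt5_bounds; rewrite /leaf_gain -/x -/y /gap; lra.
Qed.

Definition T_Delta_bound (n D : nat) : R :=
  D%:R * Num.sqrt (D%:R ^+ 2 + 4) + Num.sqrt 8 * (n%:R - 2 * D%:R - 1) + Num.sqrt 5 * D%:R.

Definition TnD_bound (n D : nat) : R :=
  (n%:R - D%:R - 1) * Num.sqrt (D%:R ^+ 2 + 4)
  + (2 * D%:R - n%:R + 1) * Num.sqrt (D%:R ^+ 2 + 1) + Num.sqrt 5 * (n%:R - D%:R - 1).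

Lemma sombor_term_hub D b : sombor_term D b = Num.sqrt (D%:R ^+ 2 + (b ^ 2)%N%:R).
Proof. by rewrite /sombor_term natrD natrX. Qed.

Lemma T_Delta_boundE n D : T_Delta_bound n D =
  D%:R * sombor_term D 2 + 2 * Num.sqrt 2 * (n%:R - 2 * D%:R - 1) + Num.sqrt 5 * D%:R.
Proof. by rewrite -sombor_term22 sombor_term_hub. Qed.

Lemma TnD_boundE n D : (n <= D.*2.+1)%N ->
  TnD_bound n D = T_Delta_bound n D + (D.*2.+1 - n)%N%:R * leaf_gain D.
Proof.
move=> n_le; rewrite /TnD_bound -(sombor_term_hub D 2) -(sombor_term_hub D 1).
by rewrite T_Delta_boundE /leaf_gain /gap natrB // -addn1 -addnn !natrD; ring.
Qed.

End SomborWeights.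

Section Tree.
Variables (T : finType) (e : rel T).
Hypotheses (e_sym : symmetric e) (e_irr : irreflexive e).

Lemma edge_neq x y : e x y -> x != y.
Proof. by apply: contraTneq => ->; rewrite e_irr. Qed.

Lemma sum_edge_pairs (V : nmodType) (F : T -> T -> V) :
  (\sum_x \sum_(y | e x y && (enum_rank x < enum_rank y)%N) (F x y + F y x)
   = \sum_x \sum_(y | e x y) F x y)%R.
Proof.
under eq_bigr => x _ do rewrite big_split.
under [RHS]eq_bigr => x _ do rewrite (bigID (fun y => enum_rank x < enum_rank y)%N).
rewrite !big_split /=; congr (_ + _)%R.
rewrite (exchange_big_dep predT) //=; apply: eq_bigr => x _; apply: eq_bigl => y.
rewrite e_sym; case: (boolP (e x y)) => //= /edge_neq xy.
by rewrite ltn_neqAle -leqNgt val_eqE (inj_eq enum_rank_inj) eq_sym xy.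
Qed.

Lemma deg_sumE x : deg e x = \sum_y (e x y : nat).
Proof. by rewrite /deg -sum1dep_card big_mkcond /=; apply: eq_bigr => y _; case: (e x y). Qed.

Lemma nbrs_le_deg x (s : seq T) : uniq s -> all (e x) s -> size s <= deg e x.
Proof.
move=> us sx; rewrite /deg -(card_uniqP us); apply/subset_leq_card/subsetP => y.
by rewrite inE => /(allP sx).
Qed.

Lemma leaf_nbr x y z : deg e x = 1 -> e x y -> e x z -> z = y.
Proof.
move/eqP/cards1P => [w Nx] exy exz.
have : y \in [set y | e x y] by rewrite inE.
have : z \in [set y | e x y] by rewrite inE.
by rewrite Nx !inE => /eqP -> /eqP ->.
Qed.

Lemma connect_uniq_path (r : rel T) x y :
  connect r x y -> exists2 p, path r x p & uniq (x :: p) /\ last x p = y.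
Proof. by case/connectP => p /shortenP [p' pp' up' _] ->; exists p'. Qed.

Hypothesis e_conn : connected_graph e.

Lemma deg_gt0 u w : u != w -> 0 < deg e u.
Proof.
case/connectP: (e_conn u w) => [[|y p] /= pp ->]; first by rewrite eqxx.
by move=> _; apply/card_gt0P; exists y; rewrite inE; case/andP: pp.
Qed.

Lemma adjacent_leaves x y : e x y -> deg e x = 1 -> deg e y = 1 ->
  forall z, z \in [:: x; y].
Proof.
move=> exy dx dy z; have eyx : e y x by rewrite e_sym.
have nbr w w' : e w w' -> w \in [:: x; y] -> w' \in [:: x; y].
  move=> eww'; rewrite !inE => /orP [] /eqP ew; rewrite ew in eww'.
    by rewrite (leaf_nbr dx exy eww') eqxx orbT.
  by rewrite (leaf_nbr dy eyx eww') eqxx.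
have cl : closed e [:: x; y].
  by move=> w w' eww'; apply/idP/idP; apply: nbr; rewrite // e_sym.
by rewrite -(closed_connect cl (e_conn x z)) mem_head.
Qed.

Lemma edge_deg_sum x y w : e x y -> w \notin [:: x; y] -> 3 <= deg e x + deg e y.
Proof.
move=> exy; apply: contraR; rewrite -ltnNge => small.
have eyx : e y x by rewrite e_sym.
have := deg_gt0 (edge_neq exy); have := deg_gt0 (edge_neq eyx) => dy dx.
by apply: adjacent_leaves => //; lia.
Qed.

Hypothesis e_acyc : acyclic e.

Lemma acyclic_cycle c : uniq c -> 3 <= size c -> cycle e c -> False.
Proof. by move=> uc sc; apply/negP/e_acyc. Qed.

Lemma no_triangle x y z : e x y -> e y z -> e z x -> False.
Proof.
move=> exy eyz ezx; apply: (@acyclic_cycle [:: x; y; z]).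
- by rewrite /= !inE !negb_or (edge_neq exy) (edge_neq eyz) eq_sym (edge_neq ezx).
- by [].
- by rewrite /= exy eyz ezx.
Qed.

Definition avoid (u : T) : rel T := [rel a b | [&& e a b, a != u & b != u]].

Lemma avoid_sym u : symmetric (avoid u).
Proof. by move=> a b; rewrite /avoid /= e_sym (andbC (a != u)). Qed.

Lemma path_avoid u a p : path e a p -> u \notin a :: p -> path (avoid u) a p.
Proof.
move=> pe up; apply: (sub_in_path (P := predC1 u)) pe => [x y|].
  by rewrite !inE /avoid /= => -> -> ->.
by apply/allP => x /=; apply: contraTneq => ->.
Qed.

Lemma avoid_notin u a p : path (avoid u) a p -> u \notin p.
Proof.
elim: p a => //= x p IHp a /andP [/and3P [_ _ xu] /IHp].
by rewrite inE negb_or eq_sym xu.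
Qed.

Lemma no_detour y a b : e y a -> e y b -> a != b -> ~~ connect (avoid y) a b.
Proof.
move=> eya eyb ab; apply/negP => /connect_uniq_path [p pp [up lp]].
apply: (@acyclic_cycle [:: y, a & p]).
- by rewrite /= -/(uniq (a :: p)) up andbT inE negb_or (edge_neq eya) (avoid_notin pp).
- by case: p lp {pp up} => [/= lp|]; [rewrite lp eqxx in ab|].
- have eby : e b y by rewrite e_sym.
  rewrite /= eya rcons_path lp eby andbT; apply: sub_path pp.
  by move=> c d /and3P [].
Qed.

Variable root : T.

(* The parent of [u] is its unique neighbour from which [root] can be reached
   while avoiding [u]; every edge joins some [u != root] to [parent u], and
   only one such [u], which counts the edges of the tree. *)
Definition parent (u : T) : T := odflt root [pick w | e u w && connect (avoid u) w root].

Lemma parent_spec u w : e u w -> connect (avoid u) w root -> parent u = w.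
Proof.
move=> euw w_root; rewrite /parent; case: pickP => [w' /andP [euw' w'_root]|/(_ w)].
  apply/eqP; apply: contraT => w'w; case/negP: (no_detour euw' euw w'w).
  by rewrite (connect_trans w'_root) // (sym_connect_sym (avoid_sym u)).
by rewrite euw w_root.
Qed.

Lemma parent_path u w q :
  path e u (w :: q) -> uniq (u :: w :: q) -> last w q = root -> parent u = w.
Proof.
move=> /= /andP [euw pq] /andP [uwq _] lq; apply: parent_spec => //.
by apply/connectP; exists q; rewrite ?path_avoid.
Qed.

Lemma parentP u : u != root -> e u (parent u) && connect (avoid u) (parent u) root.
Proof.
move=> ur; have [[|w q] pp [up lp]] := connect_uniq_path (e_conn u root).
  by rewrite -lp eqxx in ur.
rewrite (parent_path pp up lp); case/andP: pp => -> pq.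
by apply/connectP; exists q; rewrite ?path_avoid //; case/andP: up.
Qed.

Lemma parent_edge x y : e x y -> y = parent x \/ x = parent y.
Proof.
move=> exy; have [p pp [up lp]] := connect_uniq_path (e_conn x root).
case: (boolP (y \in x :: p)) => [|yp]; last first.
  right; apply/esym/(parent_path (q := p)) => //=; first by rewrite e_sym exy.
  by rewrite yp.
rewrite inE eq_sym (negbTE (edge_neq exy)) /= => yp.
case/splitPr: yp pp up lp => p1 p2 pp up lp.
left; apply/esym/(parent_path (q := p2)); last by rewrite last_cat in lp.
  by rewrite /= exy; move: pp; rewrite cat_path => /and3P [].
move: up; rewrite /= mem_cat !inE !negb_or cat_uniq => /andP [/and3P [_ -> ->]].
by case/and3P.
Qed.

Lemma parent_root : parent root = root.
Proof.
rewrite /parent; case: pickP => // w /andP [erw /connectP [p pp lp]].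
have : root \in w :: p by rewrite lp mem_last.
rewrite inE (negbTE (avoid_notin pp)) orbF => /eqP rw.
by rewrite -rw e_irr in erw.
Qed.

Lemma parent_parent u : u != root -> parent u != root -> parent (parent u) != u.
Proof.
move=> ur pr; case/andP: (parentP ur) => _ /connect_uniq_path [[|a q] pp [up lp]].
  by rewrite -lp eqxx in pr.
rewrite (parent_path (sub_path _ pp) up lp); last by move=> c d /and3P [].
by case/andP: pp => /and3P [].
Qed.

Lemma parent_edge_oriented x y : e x y -> y = parent x ->
  (x != root) && ~~ ((y != root) && (x == parent y)).
Proof.
move=> exy yp; have xr : x != root.
  by apply: contraTneq exy => xr; rewrite yp xr parent_root e_irr.
rewrite yp xr negb_and negbK /=; case: eqP => //= /eqP pr.
by rewrite eq_sym parent_parent.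
Qed.

Lemma edge_parentE x y :
  (e x y : nat) = ((x != root) && (y == parent x)) + ((y != root) && (x == parent y)).
Proof.
have parent_nroot z : z != root -> e z (parent z) by move/parentP/andP => [].
case: (boolP (e x y)) => [exy|nexy].
  case: (parent_edge exy) => [yp|xp].
    by case/andP: (parent_edge_oriented exy yp) => xr /negbTE ->; rewrite yp eqxx xr.
  have eyx : e y x by rewrite e_sym.
  by case/andP: (parent_edge_oriented eyx xp) => yr /negbTE ->; rewrite xp eqxx yr.
have [] : ((x != root) && (y == parent x)) = false /\ ((y != root) && (x == parent y)) = false.
  split; apply: contraNF nexy => /andP [zr /eqP ->]; first exact: parent_nroot.
  by rewrite e_sym; exact: parent_nroot.
by move=> -> ->.
Qed.

Lemma sum_deg_tree : \sum_x deg e x = (#|T| - 1).*2.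
Proof.
have sum_parent x : \sum_y ((x != root) && (y == parent x) : nat) = (x != root).
  rewrite (bigD1 (parent x)) //= eqxx andbT big1 ?addn0 // => y /negbTE ->.
  by rewrite andbF.
under eq_bigr => x _ do rewrite deg_sumE.
under eq_bigr => x _ do under eq_bigr => y _ do rewrite edge_parentE.
under eq_bigr => x _ do rewrite big_split /=.
rewrite big_split /= [X in _ + X]exchange_big /=.
under eq_bigr => x _ do rewrite sum_parent.
have -> : \sum_x (x != root : nat) = #|T|.-1.
  rewrite -(cardC1 root) -sum1_card [RHS]big_mkcond /=.
  by apply: eq_bigr => x _; rewrite !inE.
by rewrite addnn subn1.
Qed.
End Tree.

Lemma isomorphic_deg (T1 T2 : finType) (e1 : rel T1) (e2 : rel T2) (f : T1 -> T2) :
  bijective f -> (forall x y, e2 (f x) (f y) = e1 x y) -> forall x, deg e2 (f x) = deg e1 x.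
Proof.
move=> f_bij f_rel x; have [g fK gK] := f_bij.
rewrite /deg -(card_imset _ (bij_inj f_bij)); apply: eq_card => j; rewrite inE.
apply/idP/imsetP => [exj|[y]]; first by exists (g j); rewrite ?inE -?f_rel gK.
by rewrite inE /= -f_rel => + ->.
Qed.

Lemma card_le_vals n (A : {set 'I_n}) (s : seq nat) :
  {in A, forall j : 'I_n, (j : nat) \in s} -> #|A| <= size s.
Proof.
move=> As; rewrite cardE -(size_map val); apply: uniq_leq_size.
  by rewrite map_inj_uniq ?enum_uniq //; apply: val_inj.
by move=> k /mapP [j]; rewrite mem_enum => jA ->; apply: As.
Qed.

Section TnD.
Variables (n D : nat).
Local Notation TnD := (TnD_rel n D).

Lemma TnD_nbr (i j : 'I_n) : (i : nat) != 0 -> TnD i j ->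
  (j : nat) \in [:: if D < i then i - D else 0; i + D].
Proof. by rewrite /TnD_rel !inE; case: (ltnP D i); lia. Qed.

Lemma TnD_deg_le2 (i : 'I_n) : (i : nat) != 0 -> deg TnD i <= 2.
Proof.
move=> i0; apply: (@card_le_vals _ _ [:: if D < i then i - D else 0; i + D]).
by move=> j; rewrite inE; apply: TnD_nbr.
Qed.

Lemma TnD_deg_le1 (i : 'I_n) : n <= D.*2.+1 -> D < i -> deg TnD i <= 1.
Proof.
move=> n_le Di; have i0 : (i : nat) != 0 by rewrite -lt0n (leq_ltn_trans _ Di).
apply: (@card_le_vals _ _ [:: i - D]) => j; rewrite inE => /(TnD_nbr i0).
by rewrite Di !inE; have := ltn_ord j; have := ltn_ord i; lia.
Qed.

End TnD.

Section Hub.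
Variables (T : finType) (e : rel T).
Hypotheses (e_sym : symmetric e) (e_irr : irreflexive e).
Hypotheses (e_conn : connected_graph e) (e_acyc : acyclic e).
Variables (v : T) (D : nat).
Hypotheses (deg_v : deg e v = D) (D_ge3 : 3 <= D).

Lemma off_hub_degrees x y : e x y -> x != v -> y != v ->
  [/\ 0 < deg e x, 0 < deg e y & 3 <= deg e x + deg e y].
Proof.
move=> exy xv yv; split; [apply: (deg_gt0 e_conn xv) | apply: (deg_gt0 e_conn yv) |].
apply: (edge_deg_sum e_sym e_irr e_conn (w := v) exy).
by rewrite !inE negb_or !(eq_sym v) xv yv.
Qed.

Lemma sum_indicator_off_hub (P : pred T) :
  ~~ P v -> \sum_(u | u != v) P u = #|[set u | P u]|.
Proof.
move=> Pv; rewrite -sum1dep_card big_mkcond [RHS]big_mkcond /=.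
by apply: eq_bigr => u _; have [->|_] := eqVneq u v; [rewrite (negbTE Pv) | case: (P u)].
Qed.

Lemma sum_deg_off_hub : D + \sum_(u | u != v) deg e u = (#|T| - 1).*2.
Proof. by rewrite -deg_v -(sum_deg_tree e_sym e_irr e_conn e_acyc v) [RHS](bigD1 v). Qed.

Definition leaf_count : nat := #|[set u | e v u && (deg e u == 1)]|.

(* Every leg through [u] has length at most 2. *)
Definition short_leg (u : T) : bool := if e v u then deg e u <= 2 else deg e u == 1.

Lemma short_leg_deg u : short_leg u -> deg e u <= 2.
Proof. by rewrite /short_leg; case: ifP => // _ /eqP ->. Qed.

Lemma leaf_count_leqif :
  D.*2 + 1 <= leaf_count + #|T| ?= iff [forall (u | u != v), short_leg u].
Proof.
have n_gt0 : 0 < #|T| by apply/card_gt0P; exists v.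
have pointwise u : u != v ->
    1 + e v u <= deg e u + (e v u && (deg e u == 1)) ?= iff short_leg u.
  move=> uv; have := deg_gt0 e_conn uv; rewrite /short_leg => d_gt0; apply/leqifP.
  by move: d_gt0; case: (e v u); case: (deg e u) => [|[|[|k]]].
have := leqif_sum pointwise; rewrite !big_split /= !sum_indicator_off_hub ?e_irr //.
rewrite sum1dep_card (_ : #|[set u : T | u != v]| = #|T| - 1); last first.
  by rewrite subn1 -(cardC1 v); apply: eq_card => u; rewrite !inE.
rewrite (_ : #|[set u | e v u]| = D) -/leaf_count; last by rewrite -deg_v.
have := sum_deg_off_hub; rewrite -!addnn => sum_deg /leqifP le; apply/leqifP.
set n := #|T| in n_gt0 sum_deg le *.
by case: [forall (u | u != v), short_leg u] le; lia.
Qed.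

Lemma T_Delta_iff :
  is_T_Delta e D <-> (forall u, u != v -> deg e u <= 2) /\ leaf_count = 0.
Proof.
have leaf_leg u : e v u -> deg e u = 1 -> leg e v [:: u].
  by move=> evu du; rewrite /leg /= evu du inE (edge_neq e_irr evu).
split=> [[[_ hub1] [h [deg_h legs]]]|[small no_leaf]].
  have big_v u : 2 < deg e u -> u = v.
    by move=> du; apply: (card_le1_eqP hub1); rewrite inE ?deg_v; lia.
  have hv : h = v by apply: big_v; rewrite deg_h.
  split=> [u uv|]; first by rewrite leqNgt; apply: contra uv => /big_v ->.
  apply/eqP; rewrite cards_eq0; apply/eqP/setP => u; rewrite !inE.
  apply/negbTE/andP => [[evu /eqP du]].
  by rewrite hv in legs; have := legs _ (leaf_leg _ evu du).
split; first split.
- by split; [split | split].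
- apply: (@leq_trans #|[set v]|); last by rewrite cards1.
  by apply/subset_leq_card/subsetP => u; rewrite !inE; apply: contraTT => /small; lia.
exists v; split=> // [[|u [|w p]]] //= /and4P [] /andP [evu _] _ _ /eqP du.
move/eqP: no_leaf; rewrite cards_eq0 => /eqP /setP /(_ u).
by rewrite !inE evu du.
Qed.

Section Charges.
Variable R : realType.
Local Open Scope ring_scope.

Definition charge x y : R :=
  if x == v then 0 else if y == v then sombor_term R D (deg e x) else share R (deg e x).

Definition slack x y : R := sombor_term R (deg e x) (deg e y) - charge x y - charge y x.

Lemma slack_hub x y : x != y -> (x == v) || (y == v) -> slack x y = 0.
Proof.
rewrite /slack /charge => xy /orP [] /eqP hub; rewrite hub in xy *.
  by rewrite eqxx eq_sym (negbTE xy) deg_v; ring.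
by rewrite eqxx (negbTE xy) deg_v sombor_termC; ring.
Qed.

Lemma slack_off_hub x y : x != v -> y != v ->
  slack x y = sombor_term R (deg e x) (deg e y) - share R (deg e x) - share R (deg e y).
Proof. by move=> xv yv; rewrite /slack /charge (negbTE xv) (negbTE yv). Qed.

Lemma slack_ge0 x y : e x y -> 0 <= slack x y.
Proof.
move=> exy; have [hub|] := boolP ((x == v) || (y == v)).
  by rewrite slack_hub ?(edge_neq e_irr exy).
rewrite negb_or => /andP [xv yv]; have [dx dy dxy] := off_hub_degrees exy xv yv.
by rewrite slack_off_hub // -addrA -opprD subr_ge0 share_edge_le.
Qed.

Lemma slack_eq0 x y : (forall u, u != v -> (deg e u <= 2)%N) -> e x y -> slack x y = 0.
Proof.
move=> small exy; have [hub|] := boolP ((x == v) || (y == v)).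
  by rewrite slack_hub ?(edge_neq e_irr exy).
rewrite negb_or => /andP [xv yv]; have [dx dy dxy] := off_hub_degrees exy xv yv.
by rewrite slack_off_hub // -share_edge_eq ?dx ?dy ?small //; ring.
Qed.

Lemma sum_charge_hub : \sum_(y | e v y) charge v y = 0.
Proof. by rewrite big1 // => y _; rewrite /charge eqxx. Qed.

Lemma sum_charge u : u != v -> \sum_(y | e u y) charge u y =
  budget R (deg e u) + (e v u)%:R * hub_gain R D
  + (e v u && (deg e u == 1%N))%:R * leaf_gain R D + vertex_excess R (e v u) D (deg e u).
Proof.
move=> uv; rewrite /vertex_excess; have [evu|nevu] /= := boolP (e v u).
  have euv : e u v by rewrite e_sym.
  rewrite (bigD1 v) //= {1}/charge (negbTE uv) eqxx.
  rewrite (eq_bigr (fun=> share R (deg e u))) => [|y /andP [_ yv]]; last first.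
    by rewrite /charge (negbTE uv) (negbTE yv).
  rewrite sumr_const -mulr_natl (_ : #|_| = (deg e u).-1).
    by case: (deg e u == 1%N); rewrite /=; ring.
  rewrite /deg (cardD1 v [set y | e u y]) inE euv /=; apply: eq_card => y.
  by rewrite !inE andbC.
rewrite (eq_bigr (fun=> share R (deg e u))) => [|y euy]; last first.
  rewrite /charge (negbTE uv) ifF //; apply: contraNF nevu => /eqP <-.
  by rewrite e_sym.
by rewrite sumr_const -mulr_natl /deg cardsE; ring.
Qed.

Lemma sum_budget :
  \sum_(u | u != v) budget R (deg e u) = 2 * Num.sqrt 2 * (#|T|%:R - 1) - D%:R * slope R.
Proof.
have n_gt0 : (0 < #|T|)%N by apply/card_gt0P; exists v.
have sum_deg : \sum_(u | u != v) (deg e u)%:R = 2 * (#|T|%:R - 1) - D%:R :> R.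
  have := congr1 (GRing.natmul (1 : R)) sum_deg_off_hub.
  by rewrite natrD -mul2n natrM natrB // natr_sum; lra.
rewrite (eq_bigr (fun u => 2 * Num.sqrt 2 - 2 * slope R + (deg e u)%:R * slope R)); last first.
  by move=> u _; rewrite /budget; ring.
rewrite big_split /= -mulr_suml sum_deg sumr_const (_ : #|_| = #|T| - 1)%N; last first.
  by rewrite subn1 -(cardC1 v).
by rewrite -[X in X + _]mulr_natr natrB //; ring.
Qed.

Definition excess : R :=
  \sum_(u | u != v) vertex_excess R (e v u) D (deg e u)
  + \sum_x \sum_(y | e x y && (enum_rank x < enum_rank y)%N) slack x y.

Lemma sombor_decomposition :
  sombor e R = T_Delta_bound R #|T| D + leaf_count%:R * leaf_gain R D + excess.
Proof.
have -> : sombor e R = \sum_x \sum_(y | e x y && (enum_rank x < enum_rank y)%N)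
                         (charge x y + charge y x + slack x y).
  by apply: eq_bigr => x _; apply: eq_bigr => y _; rewrite /slack /sombor_term; ring.
under eq_bigr => x _ do rewrite big_split /=.
rewrite big_split /= sum_edge_pairs // (bigD1 v) //= sum_charge_hub add0r.
under eq_bigr => u uv do rewrite sum_charge //.
rewrite 3!big_split /= sum_budget -!mulr_suml -!natr_sum !sum_indicator_off_hub ?e_irr //.
rewrite (_ : #|[set u | e v u]| = D) ?T_Delta_boundE; last by rewrite -deg_v.
rewrite /excess /hub_gain /slope; ring.
Qed.

Lemma vertex_excess_off_hub_ge0 u : u != v -> 0 <= vertex_excess R (e v u) D (deg e u).
Proof. by move=> uv; apply/vertex_excess_ge0/(deg_gt0 e_conn uv). Qed.

Lemma sum_slack_ge0 :
  0 <= \sum_x \sum_(y | e x y && (enum_rank x < enum_rank y)%N) slack x y.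
Proof. by apply: sumr_ge0 => x _; apply: sumr_ge0 => y /andP [exy _]; apply: slack_ge0. Qed.

Lemma excess_ge0 : 0 <= excess.
Proof. by rewrite addr_ge0 ?sum_slack_ge0 ?sumr_ge0 //; apply: vertex_excess_off_hub_ge0. Qed.

Lemma excess_eq0 : excess = 0 <-> (forall u, u != v -> (deg e u <= 2)%N).
Proof.
split=> [|small].
  move/eqP; rewrite paddr_eq0 ?sum_slack_ge0 ?sumr_ge0 //; last first.
    exact: vertex_excess_off_hub_ge0.
  case/andP => /eqP ex0 _ u uv.
  rewrite -(vertex_excess_eq0 R (e v u) D (deg_gt0 e_conn uv)); apply/eqP.
  exact: (psumr_eq0P vertex_excess_off_hub_ge0 ex0).
rewrite /excess big1 ?add0r => [|u uv]; last first.
  by apply/eqP; rewrite vertex_excess_eq0 ?small ?(deg_gt0 e_conn uv).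
by rewrite big1 // => x _; rewrite big1 // => y /andP [exy _]; apply: slack_eq0.
Qed.

Lemma sombor_ge_T_Delta_bound :
  T_Delta_bound R #|T| D <= sombor e R /\
  (sombor e R = T_Delta_bound R #|T| D <->
   (forall u, u != v -> (deg e u <= 2)%N) /\ leaf_count = 0%N).
Proof.
rewrite sombor_decomposition -addrA; set bound := T_Delta_bound R #|T| D.
have leaf_ge0 : 0 <= leaf_count%:R * leaf_gain R D.
  by rewrite mulr_ge0 ?ler0n ?ltW ?leaf_gain_gt0.
split; first by rewrite lerDl addr_ge0 ?excess_ge0.
split=> [|[/excess_eq0 ex0 ->]]; last by rewrite ex0 mul0r !addr0.
rewrite -{2}[bound]addr0 => /addrI /eqP; rewrite paddr_eq0 ?excess_ge0 //.
rewrite mulf_eq0 pnatr_eq0 (gt_eqF (leaf_gain_gt0 _ D_ge3)) orbF.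
by case/andP => /eqP ? /eqP /excess_eq0.
Qed.

Lemma sombor_ge_TnD_bound : (#|T| <= D.*2.+1)%N ->
  TnD_bound R #|T| D <= sombor e R /\
  (sombor e R = TnD_bound R #|T| D <-> forall u, u != v -> short_leg u).
Proof.
move=> n_le; case: leaf_count_leqif => le_leaf eq_leaf.
set k := (leaf_count + #|T| - (D.*2 + 1))%N.
rewrite sombor_decomposition.
have -> : leaf_count = (D.*2.+1 - #|T| + k)%N by rewrite /k; lia.
rewrite natrD mulrDl [T_Delta_bound _ _ _ + _]addrA -TnD_boundE // -addrA.
set bound := TnD_bound R #|T| D.
have k_ge0 : 0 <= k%:R * leaf_gain R D by rewrite mulr_ge0 ?ler0n ?ltW ?leaf_gain_gt0.
split; first by rewrite lerDl addr_ge0 ?excess_ge0.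
have k0E : (k == 0%N) = [forall (u | u != v), short_leg u].
  by rewrite -eq_leaf /k subn_eq0 eqn_leq le_leaf.
split=> [|short].
  rewrite -{2}[bound]addr0 => /addrI /eqP; rewrite paddr_eq0 ?excess_ge0 //.
  rewrite mulf_eq0 pnatr_eq0 (gt_eqF (leaf_gain_gt0 _ D_ge3)) orbF k0E.
  by case/andP => /forall_inP.
have [k0 ex0] : k = 0%N /\ excess = 0.
  split; first by apply/eqP; rewrite k0E; apply/forall_inP.
  by apply/excess_eq0 => u /short /short_leg_deg.
by rewrite k0 ex0 mul0r !addr0.
Qed.

End Charges.

Section Labelling.
Hypothesis short : forall u, u != v -> short_leg u.

Definition far (u : T) : bool := (u != v) && ~~ e v u.
Definition mate (u : T) : T := odflt v [pick w | e u w].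
Definition deg2_nbrs : {set T} := [set u | e v u && (deg e u == 2)].

(* Listing the degree-2 neighbours of the hub first matches the labels of
   [TnD_rel]: the neighbour at position [i] gets label [i.+1], and the far
   vertex hanging from it, if any, gets label [D + i.+1]. *)
Definition hub_order : seq T := enum deg2_nbrs ++ enum ([set u | e v u] :\: deg2_nbrs).

Lemma far_leaf u : far u -> deg e u = 1.
Proof. by case/andP=> uv nevu; apply/eqP; move: (short uv); rewrite /short_leg (negbTE nevu). Qed.

Lemma far_mate u : far u -> forall y, e u y = (y == mate u).
Proof.
move=> fu; have uv : u != v by case/andP: fu.
have [w euw] : exists w, e u w.
  by have /card_gt0P [w] := deg_gt0 e_conn uv; rewrite inE; exists w.
have e_mate : e u (mate u) by rewrite /mate; case: pickP => [//|/(_ w)]; rewrite euw.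
by move=> y; apply/idP/eqP => [euy|->]; [apply: leaf_nbr (far_leaf fu) e_mate euy|].
Qed.

Lemma nbr_deg u : e v u -> 0 < deg e u <= 2.
Proof.
move=> evu; have uv : u != v by rewrite eq_sym (edge_neq e_irr evu).
by move: (short uv) (deg_gt0 e_conn uv); rewrite /short_leg evu => -> ->.
Qed.

Lemma mate_deg2 u : far u -> mate u \in deg2_nbrs.
Proof.
move=> fu; have eum : e u (mate u) by rewrite far_mate.
case/andP: (fu) => uv nevu; have mv : mate u != v.
  by apply: contraNneq nevu => mv; rewrite e_sym -mv.
have evm : e v (mate u).
  apply: contraT => nevm; have := edge_deg_sum e_sym e_irr e_conn (w := v) eum.
  rewrite !far_leaf //; last by rewrite /far mv.
  by rewrite !inE negb_or !(eq_sym v) uv mv => /(_ isT).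
rewrite inE evm eqn_leq (proj2 (andP (nbr_deg evm))) /=.
apply: (@nbrs_le_deg _ _ _ [:: v; u]); first by rewrite /= inE eq_sym uv.
by rewrite /= e_sym evm -(e_sym u) eum.
Qed.

Lemma mate_inj : {in far &, injective mate}.
Proof.
move=> x y fx fy mxy; apply/eqP; apply: contraT => xy.
have := mate_deg2 fx; rewrite inE => /andP [evm /eqP dm].
suff : 3 <= deg e (mate x) by rewrite dm.
case/andP: (fx) => xv _; case/andP: (fy) => yv _.
apply: (@nbrs_le_deg _ _ _ [:: v; x; y]).
  by rewrite /= !inE !negb_or !(eq_sym v) xv yv xy.
have exm : e (mate x) x by rewrite e_sym far_mate.
have eym : e (mate x) y by rewrite mxy e_sym far_mate.
by rewrite /= e_sym evm exm eym.
Qed.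

Lemma leaf_nbrsE : [set u | e v u] :\: deg2_nbrs = [set u | e v u && (deg e u == 1)].
Proof.
apply/setP => u; rewrite !inE; case evu: (e v u); rewrite ?andbF //=.
by case/andP: (nbr_deg evu); case: (deg e u) => [|[|[|k]]].
Qed.

Lemma card_deg2_nbrs : #|deg2_nbrs| + leaf_count = D.
Proof.
rewrite -deg_v /deg -(cardsID deg2_nbrs [set u | e v u]) leaf_nbrsE; congr (_ + _).
by apply: eq_card => u; rewrite !inE; case: (e v u).
Qed.

Lemma mem_hub_order x : (x \in hub_order) = e v x.
Proof. by rewrite mem_cat !mem_enum !inE; case: (e v x); case: (deg e x == 2). Qed.

Lemma size_hub_order : size hub_order = D.
Proof. by rewrite size_cat -!cardE leaf_nbrsE card_deg2_nbrs. Qed.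

Lemma index_mate u : far u -> index (mate u) hub_order < #|deg2_nbrs|.
Proof.
by move=> fu; rewrite index_cat mem_enum mate_deg2 // cardE index_mem mem_enum mate_deg2.
Qed.

Lemma card_off_hub : (D + #|deg2_nbrs|).+1 = #|T|.
Proof.
have all_short : [forall (u | u != v), short_leg u] by apply/forall_inP.
case: leaf_count_leqif => _.
by rewrite all_short => /eqP; have := card_deg2_nbrs; lia.
Qed.

Definition label (x : T) : nat :=
  if x == v then 0 else
  if e v x then (index x hub_order).+1 else D + (index (mate x) hub_order).+1.

Variant label_spec (x : T) : nat -> Type :=
  | LabelHub of x = v : label_spec x 0
  | LabelNbr of e v x : label_spec x (index x hub_order).+1
  | LabelFar of far x : label_spec x (D + (index (mate x) hub_order).+1).

Lemma labelP x : label_spec x (label x).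
Proof.
rewrite /label; case: eqP => [->|/eqP xv]; first exact: LabelHub.
by case: ifP => [evx|nevx]; [apply: LabelNbr | apply: LabelFar; rewrite /far xv nevx].
Qed.

Lemma index_nbr x : e v x -> index x hub_order < D.
Proof. by rewrite -size_hub_order index_mem mem_hub_order. Qed.

Lemma label_lt x : label x < #|T|.
Proof. by rewrite -card_off_hub; case: labelP => [_|/index_nbr|/index_mate]; lia. Qed.

Lemma label_eq0 x : (label x == 0) = (x == v).
Proof.
case: labelP => [->|evx|/andP [xv _]]; rewrite ?eqxx ?(negbTE xv) ?addnS //.
by rewrite [x == v]eq_sym (negbTE (edge_neq e_irr evx)).
Qed.

Lemma label_nbr x : (0 < label x <= D) = e v x.
Proof.
case: labelP => [->|evx|/andP [_ /negbTE ->]]; first by rewrite e_irr.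
  by rewrite evx; have := index_nbr evx; lia.
by apply/negbTE; lia.
Qed.

Lemma label_far x : (D < label x) = far x.
Proof.
case: labelP => [->|evx|->]; last by rewrite addnS ltnS leq_addr.
  by rewrite /far eqxx.
by rewrite /far evx andbF; have := index_nbr evx; lia.
Qed.

Lemma label_mate x : far x -> label x = D + label (mate x).
Proof.
move=> fx; have := mate_deg2 fx; rewrite inE => /andP [evm _].
case: labelP => [xv|evx|_]; first by move: fx; rewrite /far xv eqxx.
  by move: fx; rewrite /far evx andbF.
by case: (labelP (mate x)) => [mv|//|/andP [_ /negP]]; first by rewrite mv e_irr in evm.
Qed.

Lemma label_inj : injective label.
Proof.
have nbr_mate z : far z -> mate z \in hub_order.
  by move/mate_deg2; rewrite inE mem_hub_order => /andP [].
move=> x y; case: labelP => [->|evx|fx]; case: labelP => [->|evy|fy] //; try lia.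
- by move=> [] eq_idx; apply: (@index_inj _ x hub_order) eq_idx; rewrite mem_hub_order.
- by have := index_nbr evx; lia.
- by have := index_nbr evy; lia.
move=> /eqP; rewrite eqn_add2l eqSS => /eqP eq_idx; apply: mate_inj => //.
by apply: (@index_inj _ x hub_order) eq_idx; apply: nbr_mate.
Qed.

Lemma spider_edgeE x y : e x y =
  [|| (x == v) && e v y, (y == v) && e v x, far y && (x == mate y) | far x && (y == mate x)].
Proof.
apply/idP/idP => [exy|].
  have [xv|xv] := eqVneq x v; first by subst x; rewrite exy.
  have [yv|yv] := eqVneq y v; first by subst y; rewrite e_sym exy orbT.
  have eyx : e y x by rewrite e_sym.
  have [fy|nfy] := boolP (far y); first by rewrite -(far_mate fy) eyx orbT.
  have evy : e v y by move: nfy; rewrite /far yv /= negbK.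
  have [fx|nfx] := boolP (far x); first by rewrite -(far_mate fx) exy.
  have evx : e v x by move: nfx; rewrite /far xv /= negbK.
  by case: (no_triangle e_irr e_acyc evx exy); rewrite e_sym.
case/or4P => /andP [] => [/eqP -> //|/eqP -> evx|fy /eqP ->|fx /eqP ->].
- by rewrite e_sym.
- by rewrite e_sym far_mate.
- by rewrite far_mate.
Qed.

Lemma label_far_edge x y :
  (D < label y) && (label x == label y - D) = far y && (x == mate y).
Proof.
rewrite label_far; have [fy|//] := boolP (far y).
by rewrite (label_mate fy) addKn (inj_eq label_inj).
Qed.

Lemma short_legs_isomorphic_TnD : isomorphic e (TnD_rel #|T| D).
Proof.
exists (fun x => Ordinal (label_lt x)); split.
  by apply: inj_card_bij; [move=> x y [] /label_inj | rewrite card_ord].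
move=> x y; rewrite spider_edgeE /TnD_rel.
have -> : forall z, nat_of_ord (Ordinal (label_lt z)) = label z by [].
by rewrite !label_eq0 !label_nbr !label_far_edge.
Qed.

End Labelling.

Lemma isomorphic_TnD_short_legs : #|T| <= D.*2.+1 ->
  isomorphic e (TnD_rel #|T| D) -> forall u, u != v -> short_leg u.
Proof.
move=> n_le [f [f_bij f_rel]] u uv.
have degf x : deg e x = deg (TnD_rel #|T| D) (f x) by rewrite (isomorphic_deg f_bij f_rel).
have fv0 : (f v : nat) = 0.
  by apply/eqP; apply: contraT => fv; have := TnD_deg_le2 D fv; rewrite -degf deg_v; lia.
have fu0 : (f u : nat) != 0.
  apply: contra uv => /eqP fu; apply/eqP/(bij_inj f_bij)/val_inj.
  by rewrite /= fu fv0.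
have := deg_gt0 e_conn uv; rewrite /short_leg degf; case: ifP => [_ _|nevu d_gt0].
  exact: TnD_deg_le2.
have Du : D < f u by move: nevu fu0; rewrite -f_rel /TnD_rel fv0 /=; lia.
by rewrite eqn_leq d_gt0 TnD_deg_le1.
Qed.

Lemma isomorphic_TnD_iff : #|T| <= D.*2.+1 ->
  isomorphic e (TnD_rel #|T| D) <-> forall u, u != v -> short_leg u.
Proof.
move=> n_le; split; first exact: isomorphic_TnD_short_legs.
exact: short_legs_isomorphic_TnD.
Qed.

End Hub.

Local Open Scope ring_scope.

Theorem theorem1p1 (R : realType) (T : finType) (e : rel T) (D : nat) :
  is_tree e ->
  (7 <= #|T|)%N ->
  (3 <= D)%N -> (D <= #|T| - 2)%N ->
  maxdeg e = D ->
  let n := #|T| in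
  ((D <= (n - 1)./2)%N ->
     D%:R * Num.sqrt (D%:R ^+ 2 + 4) + Num.sqrt 8 * (n%:R - 2 * D%:R - 1)
       + Num.sqrt 5 * D%:R <= sombor e R
     /\ (sombor e R = D%:R * Num.sqrt (D%:R ^+ 2 + 4)
                      + Num.sqrt 8 * (n%:R - 2 * D%:R - 1) + Num.sqrt 5 * D%:R
         <-> is_T_Delta e D))
  /\
  (((n - 1)./2 < D)%N ->
     (n%:R - D%:R - 1) * Num.sqrt (D%:R ^+ 2 + 4)
       + (2 * D%:R - n%:R + 1) * Num.sqrt (D%:R ^+ 2 + 1)
       + Num.sqrt 5 * (n%:R - D%:R - 1) <= sombor e R
     /\ (sombor e R = (n%:R - D%:R - 1) * Num.sqrt (D%:R ^+ 2 + 4)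
                      + (2 * D%:R - n%:R + 1) * Num.sqrt (D%:R ^+ 2 + 1)
                      + Num.sqrt 5 * (n%:R - D%:R - 1)
         <-> isomorphic e (TnD_rel n D))).
Proof.
move=> tree n_ge7 D_ge3 _ maxdeg_D n.
have [[e_sym e_irr] [e_conn e_acyc]] := tree.
have [v deg_v] : exists v, deg e v = D.
  have [|v max_v] := bigop.eq_bigmax (deg e); first by lia.
  by exists v; rewrite -max_v.
split=> [_|large].
  have [le_bound eq_bound] := sombor_ge_T_Delta_bound e_sym e_irr e_conn e_acyc deg_v D_ge3 R.
  have T_Delta := T_Delta_iff e_sym e_irr e_conn e_acyc deg_v D_ge3.
  by split=> //; apply: iff_trans eq_bound (iff_sym T_Delta).
have n_le : (n <= D.*2.+1)%N by move: large; rewrite ltn_half_double; lia.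
have [le_bound eq_bound] := sombor_ge_TnD_bound e_sym e_irr e_conn e_acyc deg_v D_ge3 R n_le.
have TnD := isomorphic_TnD_iff e_sym e_irr e_conn e_acyc deg_v D_ge3 n_le.
by split=> //; apply: iff_trans eq_bound (iff_sym TnD).
Qed.
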